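(* Let $d\ge1$, $x_1<x_2$, $x_0\in[x_1,x_2]$, let $p,r_1,\dots,r_d$ be functions on $[x_1,x_2]$ and $u_0$ a nonvanishing function on $[x_1,x_2]$ such that $M_0=\sup_{[x_1,x_2]}\frac{1}{|pu_0^2|}$ and $M_i=\sup_{[x_1,x_2]}|r_iu_0^2|$ ($i=1,\dots,d$) are finite. Then for every admissible $\mathbf j\in\mathbb Z_{\ge0}^d$ and every $x\in[x_1,x_2]$, $$|\tilde X^{(\mathbf j)}(x)|\le\tilde c_{\mathbf j}\,M_0^{\left[\frac{|\mathbf j|}{2}\right]}M_1^{\left[\frac{j_1+1}{2}\right]}M_2^{\left[\frac{j_2+1}{2}\right]}\cdots M_d^{\left[\frac{j_d+1}{2}\right]}\,|x-x_0|^{|\mathbf j|}.$$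
   Context: $[a]$ denotes the greatest integer not exceeding $a$. Notation: $\int f$ denotes $x\mapsto\int_{x_0}^x f(s)\,ds$; $|\mathbf j|=j_1+\cdots+j_d$; $\delta_i$ the $i$-th standard basis vector. A multiindex $\mathbf j\in\mathbb Z^d$ is admissible if at most one entry is odd. Formal powers: $\tilde X^{(\mathbf 0)}\equiv1$; $\tilde X^{(\mathbf j)}\equiv0$ if some $j_i<0$; for admissible $\mathbf j\ge0$, $\mathbf j\ne\mathbf 0$: if $|\mathbf j|$ is odd and $j_i$ is its odd entry, $\tilde X^{(\mathbf j)}=|\mathbf j|\int r_iu_0^2\tilde X^{(\mathbf j-\delta_i)}$; if $|\mathbf j|$ is even, $\tilde X^{(\mathbf j)}=|\mathbf j|\int\frac{1}{pu_0^2}\sum_{i=1}^d\tilde X^{(\mathbf j-\delta_i)}$. The integers $\tilde c_{\mathbf j}$ are defined by $\tilde c_{\mathbf 0}=1$, $\tilde c_{\mathbf j}=0$ if some $j_i<0$, and for admissible $\mathbf j\ge0$, $\mathbf j\neq\mathbf 0$: $\tilde c_{\mathbf j}=\tilde c_{\mathbf j-\delta_i}$ if $|\mathbf j|$ is odd with odd entry $j_i$, and $\tilde c_{\mathbf j}=\sum_{i=1}^d\tilde c_{\mathbf j-\delta_i}$ if $|\mathbf j|$ is even. *)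

From HB Require Import structures.
From mathcomp Require Import all_boot all_order all_algebra.
From mathcomp Require Import all_classical all_reals all_analysis.
Set Implicit Arguments. Unset Strict Implicit. Unset Printing Implicit Defensive.
Import Order.TTheory GRing.Theory Num.Theory.
Local Open Scope ring_scope.
Local Open Scope classical_set_scope.

Section Defs.
Variable R : realType.

Definition oint (f : R -> R) (a b : R) : R :=
  if a <= b then Rintegral lebesgue_measure `[a, b] f
  else - Rintegral lebesgue_measure `[b, a] f.

Variable d : nat.

Definition mnorm (j : 'I_d -> nat) : nat := (\sum_(i < d) j i)%N.

(* j - delta_i  (only used when j_i > 0) *)
Definition mdec (j : 'I_d -> nat) (i : 'I_d) : 'I_d -> nat :=
  fun k => if k == i then (j k).-1 else j k.

Definition admissible (j : 'I_d -> nat) : Prop :=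
  (#|[pred i : 'I_d | odd (j i)]| <= 1)%N.

Variables (p u0 : R -> R) (r : 'I_d -> R -> R) (x0 : R).

(* Formal powers, by recursion on the fuel n = |j|. A term X^(j - delta_i)
   with j_i = 0 (a negative entry) is 0. *)
Fixpoint Xrec (n : nat) (j : 'I_d -> nat) : R -> R :=
  match n with
  | 0%N => fun _ => 1
  | n'.+1 =>
    if odd n then
      match [pick i | odd (j i)] with
      | Some i => fun x => n%:R *
          oint (fun s => r i s * u0 s ^+ 2 * Xrec n' (mdec j i) s) x0 x
      | None => fun _ => 0
      end
    else fun x => n%:R *
      oint (fun s => (p s * u0 s ^+ 2)^-1 *
              \sum_(i < d) (if (0 < j i)%N then Xrec n' (mdec j i) s else 0))
           x0 x
  end.

Definition Xt (j : 'I_d -> nat) : R -> R := Xrec (mnorm j) j.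

End Defs.

Section Cdefs.
Variable d : nat.
Fixpoint crec (n : nat) (j : 'I_d -> nat) : nat :=
  match n with
  | 0%N => 1%N
  | n'.+1 =>
    if odd n then
      match [pick i | odd (j i)] with
      | Some i => crec n' (mdec j i)
      | None => 0%N
      end
    else (\sum_(i < d) (if (0 < j i)%N then crec n' (mdec j i) else 0))%N
  end.
Definition ct (j : 'I_d -> nat) : nat := crec (mnorm j) j.
End Cdefs.

(** If |j| = n + 1 is odd, X^(j) = (n + 1) \int r_i u0^2 X^(j - delta_i) with
    j_i the odd entry: the factor |r_i u0^2| <= M_i raises the exponent of M_i
    by one and keeps that of M0.  If |j| is even, every entry of j is even, so
    each X^(j - delta_i) carries the same powers of the M_i as j, and the factor
    1/(p u0^2) raises the exponent of M0.  In both cases the integral of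
    C |s - x0|^n between x0 and x is C |x - x0|^(n+1) / (n + 1), and the factor
    n + 1 cancels the division.  Integrals are only compared with these
    polynomial integrals, never split or rescaled. *)

From mathcomp Require Import all_boot all_order all_algebra.
From mathcomp Require Import all_classical all_reals all_analysis.
From mathcomp Require Import ring lra.
Import Order.TTheory GRing.Theory Num.Theory numFieldNormedType.Exports.
Local Open Scope ring_scope.
Local Open Scope classical_set_scope.

Section integral_bounds.
Context d (T : measurableType d) (R : realType) (mu : {measure set T -> \bar R}).

(* Unlike [ge0_le_integral], no measurability is needed: a nonnegative integral
   is a supremum over the simple functions below the integrand. *)
Lemma ge0_le_integral_nomf (D : set T) (f g : T -> \bar R) :
  (forall x, D x -> 0 <= f x)%E -> (forall x, D x -> f x <= g x)%E ->
  (\int[mu]_(x in D) f x <= \int[mu]_(x in D) g x)%E.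
Proof.
move=> f0 fg.
have g0 x : D x -> (0 <= g x)%E by move=> Dx; exact: le_trans (f0 x Dx) (fg x Dx).
rewrite !ge0_integralE //; apply: ereal_sup_le => _ [h hf <-]; exists h => //= x.
apply: le_trans (hf x) _; rewrite /patch; case: ifP => // /[1!inE]; exact: fg.
Qed.

Lemma normr_Rintegral_le (D : set T) (f g : T -> R) (v : R) :
  (\int[mu]_(x in D) (g x)%:E = v%:E)%E -> (forall x, D x -> `|f x| <= g x) ->
  `|\int[mu]_(x in D) f x| <= v.
Proof.
move=> gv fg.
have part_le (h : T -> \bar R) : (forall x, D x -> 0 <= h x <= `|f x|%:E)%E ->
    (0 <= \int[mu]_(x in D) h x <= v%:E)%E.
  move=> h0; rewrite integral_ge0 => [|x /h0 /andP[]//]; rewrite -gv.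
  apply: ge0_le_integral_nomf => x Dx; first by case/andP: (h0 x Dx).
  by case/andP: (h0 x Dx) => _ /le_trans; apply; rewrite lee_fin fg.
have /andP[p0 pv] : (0 <= \int[mu]_(x in D) (EFin \o f)^\+ x <= v%:E)%E.
  apply: part_le => x _; rewrite funepos_ge0 funeposE /= -EFin_max lee_fin.
  by rewrite ge_max ler_norm normr_ge0.
have /andP[n0 nv] : (0 <= \int[mu]_(x in D) (EFin \o f)^\- x <= v%:E)%E.
  apply: part_le => x _; rewrite funeneg_ge0 funenegE /= -EFin_max lee_fin.
  by rewrite ge_max -normrN ler_norm normr_ge0.
rewrite /Rintegral integralE.
move: p0 pv n0 nv.
case: (\int[mu]_(x in D) _)%E => [a| |]; case: (\int[mu]_(x in D) _)%E => [b| |] //.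
all: rewrite ?leye_eq ?andbF //= !lee_fin => a0 av b0 bv.
rewrite ler_norml; apply/andP; split; lra.
Qed.

End integral_bounds.

Section poly_integral.
Context {R : realType}.
Local Notation mu := (@lebesgue_measure R).

Lemma integral_deriv_horner (P : {poly R}) (a b : R) : a <= b ->
  (\int[mu]_(x in `[a, b]) (P^`().[x])%:E = (P.[b] - P.[a])%:E)%E.
Proof.
rewrite le_eqVlt => /predU1P[<-|ab]; first by rewrite set_itv1 integral_set1 subrr.
rewrite EFinB; apply: continuous_FTC2 => //.
- exact/continuous_subspaceT/continuous_horner.
- split; first by move=> s _; exact: derivable_horner.
  + exact/cvg_at_right_filter/continuous_horner.
  + exact/cvg_at_left_filter/continuous_horner.
- by move=> s _; rewrite derive1E derive_val.
Qed.

Lemma integral_expr_subl (C : R) m (a b : R) : a <= b ->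
  (\int[mu]_(s in `[a, b]) (C * (s - a) ^+ m)%:E =
    (C * ((b - a) ^+ m.+1 / m.+1%:R))%:E)%E.
Proof.
move=> ab; pose P := (C / m.+1%:R) *: ('X - a%:P) ^+ m.+1.
rewrite [RHS](_ : _ = (P.[b] - P.[a])%:E); last first.
  by rewrite !hornerE subrr expr0n /= mulr0 subr0; congr EFin; ring.
rewrite -integral_deriv_horner //; apply: eq_integral => s _; congr EFin.
rewrite derivZ deriv_exp derivXsubC mul1r.
rewrite hornerZ hornerMn horner_exp !hornerE -mulr_natl.
by field; rewrite addrC natr1 pnatr_eq0.
Qed.

Lemma integral_expr_subr (C : R) m (a b : R) : a <= b ->
  (\int[mu]_(s in `[a, b]) (C * (b - s) ^+ m)%:E =
    (C * ((b - a) ^+ m.+1 / m.+1%:R))%:E)%E.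
Proof.
move=> ab; pose P := - (C / m.+1%:R) *: (b%:P - 'X) ^+ m.+1.
rewrite [RHS](_ : _ = (P.[b] - P.[a])%:E); last first.
  by rewrite !hornerE subrr expr0n /= mulr0 sub0r; congr EFin; ring.
rewrite -integral_deriv_horner //; apply: eq_integral => s _; congr EFin.
rewrite derivZ deriv_exp derivB derivC derivX.
rewrite hornerZ hornerMn hornerM horner_exp !hornerE -mulr_natl.
by field; rewrite addrC natr1 pnatr_eq0.
Qed.

Lemma norm_oint_le (f : R -> R) (C a x : R) m :
  (forall s, s \in `[Num.min a x, Num.max a x] -> `|f s| <= C * `|s - a| ^+ m) ->
  `|oint f a x| <= C * (`|x - a| ^+ m.+1 / m.+1%:R).
Proof.
rewrite /oint; have [ax|/ltW xa] := leP a x => hf.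
  rewrite [`|x - a|]ger0_norm ?subr_ge0 //.
  apply: normr_Rintegral_le; first exact: integral_expr_subl.
  move=> s /= /[dup] hs /[!in_itv] /= /andP[le_as _].
  by rewrite -[s - a]ger0_norm ?subr_ge0 //; exact: hf (mem_set hs).
rewrite normrN distrC [`|a - x|]ger0_norm ?subr_ge0 //.
apply: normr_Rintegral_le; first exact: integral_expr_subr.
move=> s /= /[dup] hs /[!in_itv] /= /andP[_ le_sa].
by rewrite -[a - s]ger0_norm ?subr_ge0 // distrC; exact: hf (mem_set hs).
Qed.
End poly_integral.

Section multiindex.
Context {d : nat}.
Implicit Types (j : 'I_d -> nat) (i k : 'I_d).

Lemma even_sum (P : pred 'I_d) (F : 'I_d -> nat) :
  (forall k, P k -> ~~ odd (F k)) -> ~~ odd (\sum_(k | P k) F k).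
Proof.
move=> Feven; apply: (big_ind (fun n => ~~ odd n)) => // a b ea eb.
by rewrite oddD (negbTE ea) (negbTE eb).
Qed.

Lemma mnormD1 j i : mnorm j = (j i + \sum_(k | k != i) j k)%N.
Proof. by rewrite /mnorm (bigD1 i). Qed.

Lemma mnorm_eq0 j : mnorm j = 0%N -> forall k, j k = 0%N.
Proof. by move=> j0 k; apply/eqP; rewrite -leqn0 -j0 (mnormD1 j k) leq_addr. Qed.

Lemma mnorm_mdec j i : (0 < j i)%N -> mnorm (mdec j i) = (mnorm j).-1.
Proof.
move=> ji0; rewrite (mnormD1 (mdec j i) i) (mnormD1 j i) /mdec eqxx.
rewrite (eq_bigr j); last by move=> k /negbTE ->.
by case: (j i) ji0.
Qed.

Lemma admissible_odd_eq {j k l} : admissible j -> odd (j k) -> odd (j l) -> k = l.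
Proof.
move=> adm jk jl; apply/eqP; apply: contraT => kl.
have : (1 < #|[pred i | odd (j i)]|)%N by apply/card_gt1P; exists k, l.
by rewrite ltnNge adm.
Qed.

Lemma mdec_admissible j i :
  (forall k, k != i -> ~~ odd (j k)) -> admissible (mdec j i).
Proof.
move=> even_off_i; rewrite /admissible -(card1 i).
apply: subset_leq_card; apply/fintype.subsetP => k; rewrite !inE /mdec.
by case: eqP => // /eqP /even_off_i /negbTE ->.
Qed.

Lemma admissible_even j : admissible j -> ~~ odd (mnorm j) -> forall k, ~~ odd (j k).
Proof.
move=> adm even_j k; apply: contra even_j => jk.
have even_rest : ~~ odd (\sum_(l | l != k) j l).
  by apply: even_sum => l; apply: contra => jl; rewrite (admissible_odd_eq adm jl jk).
by rewrite (mnormD1 j k) oddD jk (negbTE even_rest).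
Qed.

Lemma odd_mnorm_exists j : odd (mnorm j) -> exists i, odd (j i).
Proof.
move=> odd_j; apply/existsP; apply: contraLR odd_j; rewrite negb_exists => /forallP.
by move=> all_even; apply: even_sum => k _; exact: all_even.
Qed.

Lemma crecS_even n j : odd n ->
  crec n.+1 j = (\sum_(k < d) (if (0 < j k)%N then crec n (mdec j k) else 0))%N.
Proof. by move=> odd_n; rewrite /= odd_n. Qed.

Lemma crecS_odd {n j i} : ~~ odd n -> admissible j -> odd (j i) ->
  crec n.+1 j = crec n (mdec j i).
Proof.
move=> even_n adm ji; rewrite /= even_n.
case: pickP => [k jk|/(_ i)]; last by rewrite ji.
by rewrite (admissible_odd_eq adm jk ji).
Qed.

Section weight.
Context {R : comPzSemiRingType} (M : 'I_d -> R).

Definition weight j := \prod_(i < d) M i ^+ (j i).+1./2.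

Lemma weight_mdec_even {j k} : ~~ odd (j k) -> (0 < j k)%N ->
  weight (mdec j k) = weight j.
Proof.
move=> jk jk0; apply: eq_bigr => l _; rewrite /mdec; case: eqP => // ->.
by rewrite prednK // -!uphalfE !uphalf_half /= (negbTE jk).
Qed.

Lemma weight_mdec_odd {j i} : odd (j i) -> weight j = M i * weight (mdec j i).
Proof.
move=> ji; rewrite /weight (bigD1 i) //= [in RHS](bigD1 i) //= /mdec eqxx.
rewrite mulrA -exprS; congr (_ ^+ _ * _).
  by case: (j i) ji => //= m; rewrite uphalf_half => /negbTE ->.
by apply: eq_bigr => k /negbTE ->.
Qed.

Lemma weight0 j : (forall k, j k = 0%N) -> weight j = 1.
Proof. by move=> j0; rewrite /weight big1 // => k _; rewrite j0. Qed.

End weight.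
End multiindex.

Section formal_power_bound.
Context {R : realType} {d : nat} {p u0 : R -> R} {r : 'I_d -> R -> R}.
Context {x1 x2 x0 M0 : R} {M : 'I_d -> R}.
Hypothesis x0_in : x0 \in `[x1, x2].
Hypothesis M0_ub : forall y, y \in `[x1, x2] -> `|(p y * u0 y ^+ 2)^-1| <= M0.
Hypothesis M_ub : forall i y, y \in `[x1, x2] -> `|r i y * u0 y ^+ 2| <= M i.

Local Notation X := (Xrec p u0 r x0).

Lemma XrecS_even n j : odd n -> X n.+1 j = fun x => n.+1%:R *
  oint (fun s => (p s * u0 s ^+ 2)^-1 *
          \sum_(i < d) (if (0 < j i)%N then X n (mdec j i) s else 0)) x0 x.
Proof. by move=> odd_n; rewrite /= odd_n. Qed.

Lemma XrecS_odd {n j i} : ~~ odd n -> admissible j -> odd (j i) ->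
  X n.+1 j = fun x => n.+1%:R *
    oint (fun s => r i s * u0 s ^+ 2 * X n (mdec j i) s) x0 x.
Proof.
move=> even_n adm ji; rewrite /= even_n.
case: pickP => [k jk|/(_ i)]; last by rewrite ji.
by rewrite (admissible_odd_eq adm jk ji).
Qed.

Lemma segment_subset {y s} : y \in `[x1, x2] ->
  s \in `[Num.min x0 y, Num.max x0 y] -> s \in `[x1, x2].
Proof.
move: x0_in; rewrite !inE /= !in_itv /= => /andP[x10 x02] /andP[x1y yx2] /andP[ms sM].
by rewrite (le_trans _ ms) ?(le_trans sM) // ?le_min ?ge_max ?x10 ?x1y ?x02.
Qed.

Lemma norm_mulr_oint_le (f : R -> R) (C : R) n y :
  (forall s, s \in `[x1, x2] -> `|f s| <= C * `|s - x0| ^+ n) -> y \in `[x1, x2] ->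
  `|n.+1%:R * oint f x0 y| <= C * `|y - x0| ^+ n.+1.
Proof.
move=> f_le y_in; rewrite normrM ger0_norm ?ler0n // mulrC -ler_pdivlMr ?ltr0n //.
by rewrite -mulrA; apply: norm_oint_le => s /(segment_subset y_in); exact: f_le.
Qed.

Definition bounded_Xrec n j := forall y, y \in `[x1, x2] ->
  `|X n j y| <= (crec n j)%:R * M0 ^+ n./2 * weight M j * `|y - x0| ^+ n.

Lemma bounded_XrecS_even n j : odd n -> (forall k, ~~ odd (j k)) ->
  (forall k, (0 < j k)%N -> bounded_Xrec n (mdec j k)) -> bounded_Xrec n.+1 j.
Proof.
move=> odd_n even_j IH y y_in; rewrite XrecS_even // crecS_even //.
pose c k := if (0 < j k)%N then (crec n (mdec j k))%:R * M0 ^+ n./2 * weight M j else 0.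
have -> : (\sum_(k < d) (if (0 < j k)%N then crec n (mdec j k) else 0))%:R *
    M0 ^+ n.+1./2 * weight M j = M0 * \sum_(k < d) c k.
  rewrite natr_sum !mulr_suml mulr_sumr; apply: eq_bigr => k _; rewrite /c.
  rewrite -uphalfE uphalf_half odd_n /= exprS.
  by case: ifP => _; [rewrite mulrCA !mulrA | rewrite !mul0r mulr0].
apply: norm_mulr_oint_le => // s s_in; rewrite normrM -mulrA mulr_suml.
apply: ler_pM => //; first exact: M0_ub.
apply: le_trans (ler_norm_sum _ _ _) _; apply: ler_sum => k _; rewrite /c.
case: ifP => jk0; last by rewrite normr0 mul0r.
by rewrite -(weight_mdec_even M (even_j k) jk0); exact: IH.
Qed.

Lemma bounded_XrecS_odd {n j i} : ~~ odd n -> admissible j -> odd (j i) ->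
  bounded_Xrec n (mdec j i) -> bounded_Xrec n.+1 j.
Proof.
move=> even_n adm ji IH y y_in.
rewrite (XrecS_odd even_n adm ji) (crecS_odd even_n adm ji) (weight_mdec_odd M ji).
rewrite -uphalfE uphalf_half (negbTE even_n) add0n.
rewrite mulrCA; apply: norm_mulr_oint_le => // s s_in; rewrite normrM -mulrA.
by apply: ler_pM => //; [exact: M_ub | exact: IH].
Qed.

Lemma bounded_Xrec_admissible {n j} : mnorm j = n -> admissible j -> bounded_Xrec n j.
Proof.
elim: n j => [|n IH] j j_n adm.
  move=> y _; rewrite /= weight0; last exact: mnorm_eq0.
  by rewrite normr1 !mul1r expr0.
have IH_mdec k : (0 < j k)%N -> (forall l, l != k -> ~~ odd (j l)) ->
    bounded_Xrec n (mdec j k).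
  by move=> jk0 ?; apply: IH; [rewrite mnorm_mdec // j_n | exact: mdec_admissible].
have [odd_n|even_n] := boolP (odd n).
  have even_j : forall k, ~~ odd (j k) by apply: admissible_even; rewrite // j_n /= odd_n.
  by apply: bounded_XrecS_even => // k jk0; apply: IH_mdec => // l _; exact: even_j.
have [i ji] : exists i, odd (j i) by apply: odd_mnorm_exists; rewrite j_n /= even_n.
apply: (bounded_XrecS_odd even_n adm ji); apply: IH_mdec => [|l li]; first exact: odd_gt0.
by apply: contra li => jl; rewrite (admissible_odd_eq adm jl ji).
Qed.

End formal_power_bound.

Theorem mainTheorem4 (R : realType) (d : nat) (hd : (0 < d)%N)
  (x1 x2 x0 : R) (h12 : x1 < x2) (hx0 : x0 \in `[x1, x2])
  (p u0 : R -> R) (r : 'I_d -> R -> R)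
  (mp : measurable_fun `[x1, x2] p)
  (mu0 : measurable_fun `[x1, x2] u0)
  (mr : forall i, measurable_fun `[x1, x2] (r i))
  (hu0 : forall x, x \in `[x1, x2] -> u0 x != 0)
  (hp : forall x, x \in `[x1, x2] -> p x != 0)
  (hM0 : has_ubound [set `|(p x * u0 x ^+ 2)^-1| | x in `[x1, x2]])
  (hMi : forall i, has_ubound [set `|r i x * u0 x ^+ 2| | x in `[x1, x2]])
  (j : 'I_d -> nat) (hj : admissible j) (x : R) (hx : x \in `[x1, x2]) :
  let M0 := sup [set `|(p y * u0 y ^+ 2)^-1| | y in `[x1, x2]] in
  let M := fun i => sup [set `|r i y * u0 y ^+ 2| | y in `[x1, x2]] in
  `|Xt p u0 r x0 j x| <=
    (ct j)%:R * M0 ^+ (mnorm j)./2 * (\prod_(i < d) M i ^+ (j i).+1./2)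
    * `|x - x0| ^+ mnorm j.
Proof.
pose M0 := sup [set `|(p y * u0 y ^+ 2)^-1| | y in `[x1, x2]].
pose M i := sup [set `|r i y * u0 y ^+ 2| | y in `[x1, x2]].
have M0_ub y : y \in `[x1, x2] -> `|(p y * u0 y ^+ 2)^-1| <= M0.
  by move=> /set_mem y_in; apply: ub_le_sup hM0 _ (imageP _ y_in).
have M_ub i y : y \in `[x1, x2] -> `|r i y * u0 y ^+ 2| <= M i.
  by move=> /set_mem y_in; apply: ub_le_sup (hMi i) _ (imageP _ y_in).
exact: (bounded_Xrec_admissible hx0 M0_ub M_ub erefl hj x hx).
Qed.
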